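(* Let $\mathbb{F}$ be a field and $f\in\mathbb{F}(X)$ of degree $d\ge1$. Write $f^{(k)}=g_k/h_k$ in lowest terms, and let $e,\epsilon,\mu,\nu$ be the smallest positive integers $k$ such that, respectively, $g_k(0)=0$, $h_k(0)=0$, $\deg g_k<\deg h_k$, $\deg g_k>\deg h_k$ (each $\infty$ if no such $k$ exists). If $\min\{\mu,\nu\}<\infty$ set $\delta=|\deg g_{\min\{\mu,\nu\}}-\deg h_{\min\{\mu,\nu\}}|$. Let $S_k$ and $T_k$ denote the multiplicity of $0$ as a root of $g_k$ and of $h_k$ respectively (the degree of the lowest-order term). Then: (i) If $\nu<\mu$, then for every integer $i\ge1$, $\deg g_{i\nu}=d^{i\nu}$ and $\deg h_{i\nu}=d^{i\nu}-\delta^i$; and $\deg g_k=\deg h_k=d^k$ whenever $k\not\equiv0\pmod\nu$. (ii) If $\mu<\nu$ and $\epsilon=e=\infty$, then $\deg g_k=\deg h_k=d^k$ for all $k\ge1$ with $k\ne\mu$. (iii) If $\mu<\nu$ and $e<\epsilon$, write $S=S_e$. Then for $k=ie+\mu$ with $i\ge0$ an integer, $\deg g_k=d^k-\delta S^i$ and $\deg h_k=d^k$; for all other $k\ge1$, $\deg g_k=\deg h_k=d^k$. (iv) If $\mu<\nu$ and $\epsilon<\infty$ (so that $e=\epsilon+\mu$), write $T=T_\epsilon$. Then for every $k\ge1$, $\deg g_{\mu+k}=d^{\mu+k}-\delta S_k$ and $\deg h_{\mu+k}=d^{\mu+k}-\delta T_k$. Moreover, for $k=ie$ with $i\ge1$,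 $S_k=\delta^iT^i$ and $T_k=0$; for $k=ie+\epsilon$ with $i\ge0$, $T_k=\delta^iT^{i+1}$ and $S_k=0$; and for all other $k\ge1$, $S_k=T_k=0$.
   Context: Rational functions are in lowest terms with $\deg(g/h)=\max\{\deg g,\deg h\}$; iterates $f^{(k)}$ are $k$-fold compositions of $f$. *)

From HB Require Import structures.
From mathcomp Require Import all_boot all_order all_algebra.
Set Implicit Arguments. Unset Strict Implicit. Unset Printing Implicit Defensive.
Import Order.TTheory GRing.Theory Num.Theory.
Local Open Scope ring_scope.

(* degree of a polynomial (the zero polynomial gets degree 0; irrelevant here) *)
Definition pdeg (F : fieldType) (p : {poly F}) : nat := (size p).-1.

Definition rat_comp (F : fieldType) (g h : {poly F})
    (r : {fraction {poly F}}) : {fraction {poly F}} :=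
  (map_poly (fun c : F => tofrac c%:P) g : {poly {fraction {poly F}}}).[r] /
  (map_poly (fun c : F => tofrac c%:P) h : {poly {fraction {poly F}}}).[r].

Definition rat_iter (F : fieldType) (g h : {poly F}) (k : nat)
    : {fraction {poly F}} :=
  iter k (rat_comp g h) (tofrac 'X).

(* m is the smallest positive integer satisfying P, with None = infinity *)
Definition is_first (P : nat -> bool) (m : option nat) : Prop :=
  match m with
  | Some n => (0 < n)%N /\ P n /\ (forall k, (0 < k)%N -> (k < n)%N -> ~~ P k)
  | None => forall k, (0 < k)%N -> ~~ P k
  end.

Definition olt (a b : option nat) : Prop :=
  match a, b with
  | Some x, Some y => (x < y)%N
  | Some _, None => True
  | None, _ => False
  end.

Definition absdiff (a b : nat) : nat := ((a - b) + (b - a))%N.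

(* Write f = g_1/h_1 and, for polynomials p, G, H, let hom_m(p; G, H) = H^m p(G/H).
   If (g, h) is coprime with max(deg g, deg h) = m, then for every coprime pair
   (G, H) the pair (hom_m(g; G, H), hom_m(h; G, H)) is again coprime and of exact
   degree m * max(deg G, deg H).  Hence f^(j+k) = f^(j) o f^(k) gives, up to a
   common constant, g_(j+k) = hom_(d^j)(g_j; g_k, h_k) and
   h_(j+k) = hom_(d^j)(h_j; g_k, h_k), and max(deg g_k, deg h_k) = d^k.
   When deg G <> deg H the degree of hom_m(p; G, H) comes from a single dominant
   monomial, picked by the top coefficient of p if deg G > deg H and by its lowest
   nonzero one otherwise; likewise its order at 0 is read off from the lowest
   (resp. top) coefficient of p when G(0) = 0 (resp. H(0) = 0).  Each case then
   follows by splitting an index as j + k with k one of nu, mu, e, eps. *)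

From HB Require Import structures.
From mathcomp Require Import all_boot all_order all_algebra.
From mathcomp Require Import ring zify.
Import Order.TTheory GRing.Theory Num.Theory.
Set Implicit Arguments. Unset Strict Implicit. Unset Printing Implicit Defensive.
Local Open Scope ring_scope.

Section PolyCoef.
Variable R : nzRingType.
Implicit Types p q : {poly R}.

Lemma coefM_top p q a b : (size p <= a.+1)%N -> (size q <= b.+1)%N ->
  (p * q)`_(a + b) = p`_a * q`_b.
Proof.
move=> sp sq; rewrite coefM.
have ha : (a < (a + b).+1)%N by rewrite ltnS leq_addr.
rewrite (bigD1 (Ordinal ha)) //= addKn big1 ?addr0 // => j /eqP jne.
have [ja|ja] := ltnP j a.
  by rewrite [q`__]nth_default ?mulr0 //; apply: leq_trans sq _; have := ltn_ord j; lia.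
rewrite nth_default ?mul0r //; apply: leq_trans sp _.
have : nat_of_ord j != a by apply/eqP => ja'; apply: jne; apply: val_inj.
lia.
Qed.

Lemma coefX_top p a n : (size p <= a.+1)%N -> (p ^+ n)`_(a * n) = p`_a ^+ n.
Proof.
move=> sp; elim: n => [|n IHn]; first by rewrite muln0 !expr0 coefC.
rewrite exprS mulnS coefM_top // ?IHn ?exprS //.
by apply: leq_trans (size_poly_exp_leq _ _) _; rewrite ltnS leq_mul //; move: sp; lia.
Qed.

Lemma size_poly_coef_top p n : (size p <= n.+1)%N -> p`_n != 0 -> size p = n.+1.
Proof.
move=> sp pn; apply/eqP; rewrite eqn_leq sp ltnNge; apply/negP => le_p_n.
by move/eqP: pn; apply; apply: nth_default.
Qed.

Lemma coef_size_top p n : size p = n.+1 -> p`_n != 0.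
Proof.
by move=> sp; have := lead_coef_eq0 p; rewrite lead_coefE sp /= => ->; rewrite -size_poly_eq0 sp.
Qed.

Lemma size_sum_dom n (T : 'I_n -> {poly R}) (a : 'I_n) :
  T a != 0 -> (forall i, i != a -> (size (T i) < size (T a))%N) ->
  size (\sum_i T i) = size (T a).
Proof.
move=> Ta0 lt_Ta; rewrite (bigD1 a) //= size_polyDl //.
apply: (big_ind (fun q => size q < size (T a))%N) => //.
- by rewrite size_poly0 size_poly_gt0.
- by move=> q1 q2 lt1 lt2; apply: leq_ltn_trans (size_polyD _ _) _; rewrite gtn_max lt1 lt2.
Qed.

End PolyCoef.

Section PolyOrder.
Variable F : fieldType.
Implicit Types p q : {poly F}.

Lemma mup0_coef p : p != 0 ->
  (forall i, (i < mup 0 p)%N -> p`_i = 0) /\ p`_(mup 0 p) != 0.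
Proof.
move=> p0; set s := mup 0 p.
have X0 : ('X - 0%:P : {poly F}) = 'X by rewrite subr0.
have : ('X - 0%:P) ^+ s %| p by rewrite -mup_geq.
rewrite X0 => /dvdpP [q ep]; split; first by move=> i lis; rewrite ep coefMXn lis.
rewrite ep coefMXn ltnn subnn; apply/negP => /eqP q0.
have : ('X - 0%:P) ^+ s.+1 %| p.
  by rewrite X0 ep exprS dvdp_mul2r ?expf_neq0 ?polyX_eq0 // -X0 dvdp_XsubCl /root horner_coef0 q0.
by rewrite -mup_geq // ltnn.
Qed.

Lemma mup0_gt0 p : p != 0 -> (0 < mup 0 p)%N = root p 0.
Proof. by move=> p0; rewrite -XsubC_dvd // dvdp_XsubCl. Qed.

Lemma mup0_le_pdeg p : p != 0 -> (mup 0 p <= pdeg p)%N.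
Proof.
move=> p0; have : ('X - 0%:P) ^+ mup 0 p %| p by rewrite -mup_geq.
by move/(dvdp_leq p0); rewrite size_exp_XsubC /pdeg; case: (size p).
Qed.

Lemma mup0Z c p : c != 0 -> mup 0 (c *: p) = mup 0 p.
Proof. by move=> c0; rewrite -mul_polyC mupMr // rootC. Qed.

Lemma mup0X p n : p != 0 -> mup 0 (p ^+ n) = (mup 0 p * n)%N.
Proof.
move=> p0; elim: n => [|n IHn]; first by rewrite expr0 muln0 mupNroot // root1.
by rewrite exprS mupM ?expf_neq0 // IHn mulnS.
Qed.

Lemma pdegZ c p : c != 0 -> pdeg (c *: p) = pdeg p.
Proof. by move=> c0; rewrite /pdeg size_scale. Qed.

Lemma pdegM p q : p != 0 -> q != 0 -> pdeg (p * q) = (pdeg p + pdeg q)%N.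
Proof.
move=> p0 q0; rewrite /pdeg size_mul //.
by move: p0 q0; rewrite -!size_poly_gt0; case: (size p) (size q) => [|a] [|b]; lia.
Qed.

Lemma pdegX p n : pdeg (p ^+ n) = (pdeg p * n)%N.
Proof. exact: size_exp. Qed.

Lemma coef_lt_pdeg p i : p`_i != 0 -> i != pdeg p -> (i < pdeg p)%N.
Proof.
move=> pi0 ni; rewrite ltn_neqAle ni leqNgt; apply/negP => lt_p_i.
by move/eqP: pi0; apply; apply: nth_default; move: lt_p_i; rewrite /pdeg; case: (size p).
Qed.

Lemma coef_gt_mup0 p i : p`_i != 0 -> i != mup 0 p -> (mup 0 p < i)%N.
Proof.
have [->|p0] := eqVneq p 0; first by rewrite coef0 eqxx.
move=> pi0 ni; rewrite ltn_neqAle eq_sym ni leqNgt; apply/negP => lt_i.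
by move/eqP: pi0; apply; apply: (mup0_coef p0).1.
Qed.

Lemma mup0_sum_dom n (T : 'I_n -> {poly F}) (a : 'I_n) :
  T a != 0 -> (forall i, i != a -> T i != 0 -> (mup 0 (T a) < mup 0 (T i))%N) ->
  mup 0 (\sum_i T i) = mup 0 (T a).
Proof.
move=> Ta0 lt_Ta; set s := mup 0 (T a).
have dvd_rest : ('X - 0%:P) ^+ s.+1 %| \sum_(i | i != a) T i.
  apply: (big_ind (fun q => ('X - 0%:P) ^+ s.+1 %| q)) => //; first exact: dvdp_add.
  move=> i ia; have [->|Ti0] := eqVneq (T i) 0; first by rewrite dvdp0.
  by rewrite -mup_geq //; apply: lt_Ta.
have Ndvd_Ta : ~~ (('X - 0%:P) ^+ s.+1 %| T a) by rewrite -mup_ltn.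
rewrite (bigD1 a) //=.
have S0 : T a + \sum_(i | i != a) T i != 0.
  apply: contraNneq Ndvd_Ta => /eqP; rewrite addr_eq0 => /eqP ->.
  by rewrite dvdpNr.
apply/eqP; rewrite eqn_leq mup_leq // mup_geq // (dvdp_addl _ dvd_rest) Ndvd_Ta /=.
apply: dvdp_add; first by rewrite -mup_geq.
by apply: dvdp_trans dvd_rest; rewrite dvdp_exp2l.
Qed.

End PolyOrder.

Lemma coprimep_frac_eq (F : fieldType) (g h N D : {poly F}) :
  coprimep g h -> coprimep N D -> h != 0 -> D != 0 ->
  tofrac g / tofrac h = tofrac N / tofrac D ->
  exists2 c, c != 0 & g = c *: N /\ h = c *: D.
Proof.
move=> cgh cND h0 D0 /eqP; rewrite eqr_div ?tofrac_eq0 // -!tofracM tofrac_eq => /eqP E.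
have hD : h %| D.
  by rewrite -(@Gauss_dvdpl _ D g) 1?coprimep_sym // [D * g]mulrC E dvdp_mull.
have Dh : D %| h.
  by rewrite -(@Gauss_dvdpl _ h N) 1?coprimep_sym // [h * N]mulrC -E dvdp_mull.
have /eqpP [[c1 c2] /= /andP [c10 c20] ec] : h %= D by rewrite /eqp hD Dh.
have eh : h = (c2 / c1) *: D by rewrite mulrC -scalerA -ec scalerA mulVf ?scale1r.
exists (c2 / c1); first by rewrite mulf_neq0 ?invr_eq0.
by split => //; apply: (mulIf D0); rewrite E eh -!scalerAl -scalerAr mulrC.
Qed.

Section Homogenization.
Variable F : fieldType.
Implicit Types p G H : {poly F}.

(* [homog m p G H] is H^m p(G/H), a polynomial when size p <= m.+1. *)
Definition homog m p G H : {poly F} :=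
  \sum_(i < m.+1) p`_i *: (G ^+ i * H ^+ (m - i)).

Definition homog_at (R : comNzRingType) (phi : F -> R) m p (x y : R) : R :=
  \sum_(i < m.+1) phi p`_i * (x ^+ i * y ^+ (m - i)).

Lemma homog_atE (R : fieldType) (phi : {rmorphism F -> R}) m p (x y : R) :
  y != 0 -> (size p <= m.+1)%N ->
  homog_at phi m p x y = y ^+ m * (map_poly phi p).[x / y].
Proof.
move=> y0 sp; rewrite (horner_coef_wide _ (n := m.+1)) ?size_map_poly //.
rewrite mulr_sumr; apply: eq_bigr => i _; rewrite coef_map /=.
have le_i_m : (i <= m)%N by rewrite -ltnS.
have yi : y ^+ i != 0 by rewrite expf_neq0.
have -> : y ^+ m = y ^+ (m - i) * y ^+ i by rewrite -exprD subnK.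
rewrite exprMn exprVn; field; exact: yi.
Qed.

Lemma homog_at_scale (R : comNzRingType) (phi : F -> R) m p (x y z : R) :
  homog_at phi m p (x * z) (y * z) = z ^+ m * homog_at phi m p x y.
Proof.
rewrite /homog_at mulr_sumr; apply: eq_bigr => i _.
have le_i_m : (i <= m)%N by rewrite -ltnS.
have -> : z ^+ m = z ^+ i * z ^+ (m - i) by rewrite -exprD subnKC.
rewrite !exprMn; ring.
Qed.

Lemma homog_at0 (R : comNzRingType) (phi : F -> R) m p (x : R) :
  homog_at phi m p x 0 = phi p`_m * x ^+ m.
Proof.
rewrite /homog_at big_ord_recr /= big1 ?add0r ?subnn ?expr0 ?mulr1 // => i _.
by rewrite expr0n subn_eq0 leqNgt ltn_ord !mulr0.
Qed.

Lemma homogC m c G H : homog m c%:P G H = c *: H ^+ m.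
Proof.
rewrite /homog big_ord_recl big1 ?addr0; first by rewrite coefC /= expr0 mul1r subn0.
by move=> i _; rewrite coefC /= scale0r.
Qed.

Lemma homogZ m c p G H : homog m (c *: p) G H = c *: homog m p G H.
Proof. by rewrite /homog scaler_sumr; apply: eq_bigr => i _; rewrite coefZ scalerA. Qed.

Lemma homog_scale m p c G H : homog m p (c *: G) (c *: H) = c ^+ m *: homog m p G H.
Proof.
rewrite /homog scaler_sumr; apply: eq_bigr => i _.
have le_i_m : (i <= m)%N by rewrite -ltnS.
by rewrite !exprZn -scalerAl -scalerAr !scalerA -mulrA -exprD (subnKC le_i_m) mulrC.
Qed.

Definition tofracC : {rmorphism F -> {fraction {poly F}}} := @tofrac _ \o polyC.

Lemma tofrac_homog m p G H :
  tofrac (homog m p G H) = homog_at tofracC m p (tofrac G) (tofrac H).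
Proof.
rewrite /homog rmorph_sum; apply: eq_bigr => i _.
by rewrite -mul_polyC !rmorphM !rmorphXn.
Qed.

Lemma horner_map_homog r m p G H :
  (map_poly tofracC (homog m p G H)).[r] =
  homog_at tofracC m p (map_poly tofracC G).[r] (map_poly tofracC H).[r].
Proof.
rewrite /homog rmorph_sum horner_sum; apply: eq_bigr => i _.
by rewrite -mul_polyC !rmorphM !hornerM /= map_polyC hornerC !rmorphXn !horner_exp.
Qed.

Lemma size_homog_le m p G H M :
  (size G <= M.+1)%N -> (size H <= M.+1)%N -> (size (homog m p G H) <= (m * M).+1)%N.
Proof.
move=> sG sH; rewrite /homog.
apply: (big_ind (fun q : {poly F} => size q <= (m * M).+1)%N) => //.
- by rewrite size_poly0.
- by move=> q1 q2 s1 s2; apply: leq_trans (size_polyD _ _) _; rewrite geq_max s1 s2.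
move=> i _; apply: leq_trans (size_scale_leq _ _) _.
apply: leq_trans (size_polyMleq _ _) _.
have le_i_m : (i <= m)%N by rewrite -ltnS.
have sGi := size_poly_exp_leq G i; have sHi := size_poly_exp_leq H (m - i).
have : ((size G).-1 * i + (size H).-1 * (m - i) <= M * i + M * (m - i))%N.
  by apply: leq_add; apply: leq_mul => //; move: sG sH; lia.
rewrite -mulnDr subnKC // mulnC.
move: sGi sHi; set a := size (G ^+ i); set b := size (H ^+ (m - i)); lia.
Qed.

Lemma coef_homog_top m p G H M :
  (size G <= M.+1)%N -> (size H <= M.+1)%N ->
  (homog m p G H)`_(m * M) = homog_at idfun m p G`_M H`_M.
Proof.
move=> sG sH; rewrite /homog coef_sum; apply: eq_bigr => i _.
have le_i_m : (i <= m)%N by rewrite -ltnS.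
have -> : (m * M = M * i + M * (m - i))%N by rewrite -mulnDr subnKC // mulnC.
rewrite coefZ coefM_top ?coefX_top //;
  apply: leq_trans (size_poly_exp_leq _ _) _; rewrite ltnS leq_mul //.
- by case: (size G) sG.
- by case: (size H) sH.
Qed.

(* The top coefficients of the two homogenizations are the homogenized values of
   g and h at the top coefficients of G and H; they cannot both vanish since g
   and h are coprime. *)
Lemma homog_top_coef_neq0 (g h : {poly F}) m G H M :
  coprimep g h -> (size g <= m.+1)%N -> (size h <= m.+1)%N ->
  (size g == m.+1) || (size h == m.+1) ->
  (size G <= M.+1)%N -> (size H <= M.+1)%N -> (G`_M != 0) || (H`_M != 0) ->
  ((homog m g G H)`_(m * M) != 0) || ((homog m h G H)`_(m * M) != 0).
Proof.
move=> cgh sg sh smax sG sH nz; rewrite !coef_homog_top //.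
have [HM0|HM0] := eqVneq H`_M 0.
  rewrite HM0 !homog_at0; move: nz; rewrite HM0 eqxx orbF => GM0.
  rewrite !mulf_eq0 !expf_eq0 (negPf GM0) !andbF !orbF.
  by case/orP: smax => /eqP /coef_size_top ->; rewrite ?orbT.
have map_id (q : {poly F}) : map_poly idfun q = q by apply: map_poly_id.
rewrite !(homog_atE (idfun : {rmorphism F -> F})) // !map_id.
rewrite !mulf_eq0 !expf_eq0 (negPf HM0) !andbF /=.
have [rg|nrg] := boolP (root g (G`_M / H`_M)); last by rewrite nrg.
by rewrite (coprimep_root cgh rg) orbT.
Qed.

Lemma coprimep_homog_den m p G H : size p = m.+1 -> coprimep G H ->
  coprimep H (homog m p G H).
Proof.
move=> sp cGH; rewrite /homog big_ord_recr /= subnn expr0 mulr1.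
have -> : \sum_(i < m) p`_i *: (G ^+ i * H ^+ (m - i)) =
          (\sum_(i < m) p`_i *: (G ^+ i * H ^+ (m - i.+1))) * H.
  by rewrite mulr_suml; apply: eq_bigr => i _; rewrite -scalerAl -mulrA -exprSr subnSK.
rewrite coprimep_addl_mul coprimepZr ?coef_size_top //.
by apply: coprimep_expr; rewrite coprimep_sym.
Qed.

Lemma homogD_mul m n (u v g h : {poly F}) G H :
  H != 0 -> (size u <= n.+1)%N -> (size v <= n.+1)%N ->
  (size g <= m.+1)%N -> (size h <= m.+1)%N ->
  homog (n + m) (u * g + v * h) G H =
  homog n u G H * homog m g G H + homog n v G H * homog m h G H.
Proof.
move=> H0 su sv sg sh; apply/eqP; rewrite -tofrac_eq; apply/eqP.
have y0 : tofrac H != 0 by rewrite tofrac_eq0.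
have suvgh : (size (u * g + v * h)%R <= (n + m).+1)%N.
  apply: leq_trans (size_polyD _ _) _; rewrite geq_max.
  by apply/andP; split; apply: leq_trans (size_polyMleq _ _) _; move: su sv sg sh; lia.
rewrite tofracD !tofracM !tofrac_homog !homog_atE //.
by rewrite rmorphD !rmorphM hornerD !hornerM exprD; ring.
Qed.

(* A Bezout relation u g + v h = c turns into
   homog(u) homog(g) + homog(v) homog(h) = c H^(n+m), so a common divisor of
   homog(g) and homog(h) divides a power of H, while being coprime to H. *)
Lemma coprimep_homog (g h : {poly F}) m G H :
  coprimep g h -> (size g <= m.+1)%N -> (size h <= m.+1)%N ->
  (size g == m.+1) || (size h == m.+1) ->
  coprimep G H -> H != 0 -> coprimep (homog m g G H) (homog m h G H).
Proof.
move=> cgh sg sh smax cGH H0.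
have [[u v] /= Huv] := Bezout_coprimepP _ _ cgh.
have /size_poly1P [c c0 ec] : size (u * g + v * h) == 1%N.
  by rewrite (eqp_size Huv) size_poly1.
set n := maxn (size u) (size v).
have su : (size u <= n.+1)%N by rewrite /n; lia.
have sv : (size v <= n.+1)%N by rewrite /n; lia.
have bezout := homogD_mul G H0 su sv sg sh; rewrite ec homogC in bezout.
apply/coprimepP => q qg qh.
have qH : q %| H ^+ (n + m).
  by rewrite -(dvdpZr _ _ c0) bezout; apply: dvdp_add; apply: dvdp_mull.
have cqH : coprimep q H.
  rewrite coprimep_sym; case/orP: smax => /eqP sm.
    exact: coprimep_dvdl qg (coprimep_homog_den sm cGH).
  exact: coprimep_dvdl qh (coprimep_homog_den sm cGH).
have : coprimep q q by apply: coprimep_dvdl qH (coprimep_expr _ cqH).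
by rewrite coprimepp size_poly_eq1.
Qed.

Lemma size_homog_term m (i : nat) c G H : c != 0 -> G != 0 -> H != 0 ->
  size (c *: (G ^+ i * H ^+ (m - i))) = (i * pdeg G + (m - i) * pdeg H).+1.
Proof.
move=> c0 G0 H0; have t0 : G ^+ i * H ^+ (m - i) != 0 by rewrite mulf_neq0 ?expf_neq0.
have sz : (0 < size (G ^+ i * H ^+ (m - i))%R)%N by rewrite size_poly_gt0.
rewrite size_scale // -(prednK sz) -/(pdeg _).
by rewrite pdegM ?expf_neq0 // !pdegX mulnC [((m - i) * _)%N]mulnC.
Qed.

Lemma mup0_homog_term m (i : nat) c G H : c != 0 -> G != 0 -> H != 0 ->
  mup 0 (c *: (G ^+ i * H ^+ (m - i))) = (i * mup 0 G + (m - i) * mup 0 H)%N.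
Proof.
move=> c0 G0 H0.
by rewrite mup0Z // mupM ?expf_neq0 // !mup0X // mulnC [((m - i) * _)%N]mulnC.
Qed.

Lemma pdeg_homog_gt m p G H : p != 0 -> (size p <= m.+1)%N -> G != 0 -> H != 0 ->
  (pdeg H < pdeg G)%N ->
  pdeg (homog m p G H) = (pdeg p * pdeg G + (m - pdeg p) * pdeg H)%N.
Proof.
move=> p0 sp G0 H0 ltHG.
have lt_p_m : (pdeg p < m.+1)%N by move: sp; rewrite /pdeg; lia.
have pa : p`_(pdeg p) != 0 by rewrite -lead_coefE lead_coef_eq0.
rewrite /pdeg /homog (size_sum_dom (a := Ordinal lt_p_m)) /= ?size_homog_term //.
  by rewrite -size_poly_eq0 size_homog_term.
move=> i ia; have [->|pi0] := eqVneq p`_i 0; first by rewrite scale0r size_poly0.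
have lt_i_p : (i < pdeg p)%N.
  by apply: coef_lt_pdeg pi0 _; apply: contra ia => /eqP ia; apply/eqP/val_inj.
rewrite size_homog_term // ltnS; have := ltn_ord i.
by move: ltHG lt_i_p; move: (pdeg p) (pdeg G) (pdeg H) (nat_of_ord i) => A B C j; nia.
Qed.

Lemma pdeg_homog_lt m p G H : p != 0 -> (size p <= m.+1)%N -> G != 0 -> H != 0 ->
  (pdeg G < pdeg H)%N ->
  pdeg (homog m p G H) = (mup 0 p * pdeg G + (m - mup 0 p) * pdeg H)%N.
Proof.
move=> p0 sp G0 H0 ltGH.
have lt_p_m : (mup 0 p < m.+1)%N.
  by have := mup0_le_pdeg p0; move: sp; rewrite /pdeg; lia.
rewrite /pdeg /homog (size_sum_dom (a := Ordinal lt_p_m)) /= ?size_homog_term //;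
  try exact: (mup0_coef p0).2.
  by rewrite -size_poly_eq0 size_homog_term // (mup0_coef p0).2.
move=> i ia; have [->|pi0] := eqVneq p`_i 0; first by rewrite scale0r size_poly0.
have lt_p_i : (mup 0 p < i)%N.
  by apply: coef_gt_mup0 pi0 _; apply: contra ia => /eqP ia; apply/eqP/val_inj.
rewrite size_homog_term // ltnS; have := ltn_ord i.
by move: ltGH lt_p_i; move: (mup 0 p) (pdeg G) (pdeg H) (nat_of_ord i) => A B C j; nia.
Qed.

Lemma mup0_homog_root_num m p G H : p != 0 -> (size p <= m.+1)%N -> G != 0 -> H != 0 ->
  root G 0 -> ~~ root H 0 -> mup 0 (homog m p G H) = (mup 0 p * mup 0 G)%N.
Proof.
move=> p0 sp G0 H0 rG nrH.
have lt_p_m : (mup 0 p < m.+1)%N.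
  by have := mup0_le_pdeg p0; move: sp; rewrite /pdeg; lia.
have pa := (mup0_coef p0).2.
have mG : (0 < mup 0 G)%N by rewrite mup0_gt0.
have mH : mup 0 H = 0%N by rewrite mupNroot.
rewrite /homog (mup0_sum_dom (a := Ordinal lt_p_m)) /= ?mup0_homog_term ?mH ?muln0 ?addn0 //.
  by rewrite scaler_eq0 negb_or pa mulf_neq0 ?expf_neq0.
move=> i ia; have [->|pi0 _] := eqVneq p`_i 0; first by rewrite scale0r eqxx.
have lt_p_i : (mup 0 p < i)%N.
  by apply: coef_gt_mup0 pi0 _; apply: contra ia => /eqP ia; apply/eqP/val_inj.
by rewrite mup0_homog_term // mH muln0 addn0 ltn_mul2r mG.
Qed.

Lemma mup0_homog_root_den m p G H : p != 0 -> (size p <= m.+1)%N -> G != 0 -> H != 0 ->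
  root H 0 -> ~~ root G 0 -> mup 0 (homog m p G H) = ((m - pdeg p) * mup 0 H)%N.
Proof.
move=> p0 sp G0 H0 rH nrG.
have lt_p_m : (pdeg p < m.+1)%N by move: sp; rewrite /pdeg; lia.
have pa : p`_(pdeg p) != 0 by rewrite -lead_coefE lead_coef_eq0.
have mH : (0 < mup 0 H)%N by rewrite mup0_gt0.
have mG : mup 0 G = 0%N by rewrite mupNroot.
rewrite /homog (mup0_sum_dom (a := Ordinal lt_p_m)) /= ?mup0_homog_term ?mG ?muln0 ?add0n //.
  by rewrite scaler_eq0 negb_or pa mulf_neq0 ?expf_neq0.
move=> i ia; have [->|pi0 _] := eqVneq p`_i 0; first by rewrite scale0r eqxx.
have lt_i_p : (i < pdeg p)%N.
  by apply: coef_lt_pdeg pi0 _; apply: contra ia => /eqP ia; apply/eqP/val_inj.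
rewrite mup0_homog_term // mG muln0 add0n ltn_mul2r mH /=.
by have := ltn_ord i; have := lt_p_m; move: lt_i_p; lia.
Qed.

Lemma rat_comp_homog m (g h : {poly F}) G H :
  H != 0 -> (size g <= m.+1)%N -> (size h <= m.+1)%N ->
  rat_comp g h (tofrac G / tofrac H) = tofrac (homog m g G H) / tofrac (homog m h G H).
Proof.
move=> H0 sg sh; have y0 : tofrac H != 0 by rewrite tofrac_eq0.
have yX0 : tofrac H ^+ m != 0 by rewrite expf_neq0.
have tofracCE p r : (map_poly (fun c : F => tofrac c%:P) p).[r] = (map_poly tofracC p).[r].
  by [].
rewrite /rat_comp !tofracCE !tofrac_homog (homog_atE _ _ y0 sg) (homog_atE _ _ y0 sh).
by rewrite invfM mulrACA divff // mul1r.
Qed.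

Lemma homog_comp n m p (A B : {poly F}) G H : H != 0 -> (size p <= n.+1)%N ->
  (size A <= m.+1)%N -> (size B <= m.+1)%N ->
  homog n p (homog m A G H) (homog m B G H) = homog (n * m) (homog n p A B) G H.
Proof.
move=> H0 sp sA sB; apply/eqP; rewrite -tofrac_eq; apply/eqP.
have y0 : tofrac H != 0 by rewrite tofrac_eq0.
have sAB : (size (homog n p A B) <= (n * m).+1)%N by exact: size_homog_le.
rewrite !tofrac_homog (homog_atE _ _ y0 sA) (homog_atE _ _ y0 sB) (homog_atE _ _ y0 sAB).
rewrite [_ ^+ m * _]mulrC [_ ^+ m * (map_poly _ B).[_]]mulrC homog_at_scale.
by rewrite -horner_map_homog -exprM mulnC.
Qed.

End Homogenization.

Lemma is_first_lt (P : nat -> bool) (o : option nat) x :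
  is_first P o -> olt (Some x) o -> forall r, (0 < r)%N -> (r <= x)%N -> ~~ P r.
Proof.
case: o => [v|] /=; last by move=> NP _ r r0 _; apply: NP.
by move=> [_ [_ minv]] lt_x_v r r0 le_r_x; apply: minv => //; apply: leq_ltn_trans lt_x_v.
Qed.

Lemma is_first_eq (P : nat -> bool) (o : option nat) n :
  is_first P o -> (0 < n)%N -> P n -> (forall k, (0 < k)%N -> (k < n)%N -> ~~ P k) ->
  o = Some n.
Proof.
case: o => [v|] /=; last by move=> NP n0 Pn; move: (NP n n0); rewrite Pn.
move=> [v0 [Pv minv]] n0 Pn minn; congr Some.
have [lt_v_n|lt_n_v|//] := ltngtP v n.
  by move: (minn v v0 lt_v_n); rewrite Pv.
by move: (minv n n0 lt_n_v); rewrite Pn.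
Qed.

Section Iterates.
Variable F : fieldType.
Variables (g h : nat -> {poly F}) (d : nat).
Hypothesis Hfrac : forall k, (0 < k)%N ->
  [/\ coprimep (g k) (h k), h k != 0 &
      rat_iter (g 1%N) (h 1%N) k = tofrac (g k) / tofrac (h k)].
Hypothesis Hd : d = maxn (pdeg (g 1%N)) (pdeg (h 1%N)).
Hypothesis Hd1 : (1 <= d)%N.

Definition has_deg_exp n := [&& (size (g n) <= (d ^ n).+1)%N,
  (size (h n) <= (d ^ n).+1)%N & (size (g n) == (d ^ n).+1) || (size (h n) == (d ^ n).+1)].

Lemma has_deg_exp1 : has_deg_exp 1.
Proof.
rewrite /has_deg_exp expn1; move: Hd Hd1; rewrite /pdeg.
by move: (size (g 1%N)) (size (h 1%N)) => a b -> le; apply/and3P; split; lia.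
Qed.

Lemma iterS_homog_deg n : (0 < n)%N -> has_deg_exp n -> has_deg_exp n.+1 /\
  exists2 c, c != 0 & g n.+1 = c *: homog d (g 1%N) (g n) (h n) /\
                      h n.+1 = c *: homog d (h 1%N) (g n) (h n).
Proof.
move=> n0 /and3P [sg sh smax].
have [cn hn0 fn] := Hfrac n0; have [c1 _ _] := Hfrac (ltn0Sn 0).
have [cS hS0 fS] := Hfrac (ltn0Sn n).
have /and3P [sg1 sh1 smax1] := has_deg_exp1; rewrite expn1 in sg1 sh1 smax1.
have fSE : tofrac (g n.+1) / tofrac (h n.+1) =
           tofrac (homog d (g 1%N) (g n) (h n)) / tofrac (homog d (h 1%N) (g n) (h n)).
  by rewrite -fS /rat_iter iterS -/(rat_iter _ _ n) fn (rat_comp_homog _ hn0 sg1 sh1).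
have cND := coprimep_homog c1 sg1 sh1 smax1 cn hn0.
have top : ((g n)`_(d ^ n) != 0) || ((h n)`_(d ^ n) != 0).
  by case/orP: smax => /eqP /coef_size_top ->; rewrite ?orbT.
have topN := homog_top_coef_neq0 c1 sg1 sh1 smax1 sg sh top.
have sN := size_homog_le d (g 1%N) sg sh; have sD := size_homog_le d (h 1%N) sg sh.
have D0 : homog d (h 1%N) (g n) (h n) != 0.
  apply/eqP => D0; move: cND topN; rewrite D0 coprimep0 coef0 eqxx orbF => /eqp_size.
  rewrite size_poly1 => sz1 /(size_poly_coef_top sN); rewrite sz1.
  have : (0 < d * d ^ n)%N by rewrite muln_gt0 expn_gt0 Hd1.
  by move: (d * d ^ n)%N => k; lia.
have [c c0 [eg eh]] := coprimep_frac_eq cS cND hS0 D0 fSE.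
split; last by exists c.
rewrite /has_deg_exp expnS eg eh !size_scale // sN sD /=.
by case/orP: topN => /(size_poly_coef_top _) -> //; rewrite eqxx ?orbT.
Qed.

Lemma has_deg_exp_iter n : (0 < n)%N -> has_deg_exp n.
Proof.
elim: n => [//|[|n] IHn _]; first exact: has_deg_exp1.
by case: (iterS_homog_deg (ltn0Sn n) (IHn (ltn0Sn n))).
Qed.

Lemma iterS_homog n : (0 < n)%N ->
  exists2 c, c != 0 & g n.+1 = c *: homog d (g 1%N) (g n) (h n) /\
                      h n.+1 = c *: homog d (h 1%N) (g n) (h n).
Proof. by move=> n0; case: (iterS_homog_deg n0 (has_deg_exp_iter n0)). Qed.

Lemma size_iter_le n : (0 < n)%N ->
  (size (g n) <= (d ^ n).+1)%N /\ (size (h n) <= (d ^ n).+1)%N.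
Proof. by move=> n0; have /and3P [] := has_deg_exp_iter n0. Qed.

Lemma iterD_homog j k : (0 < j)%N -> (0 < k)%N ->
  exists2 c, c != 0 & g (j + k)%N = c *: homog (d ^ j) (g j) (g k) (h k) /\
                      h (j + k)%N = c *: homog (d ^ j) (h j) (g k) (h k).
Proof.
move=> + k0; elim: j => [//|[|j] IHj _]; first by rewrite add1n expn1; apply: iterS_homog.
have [c2 c20 [eg2 eh2]] := IHj (ltn0Sn j).
have [c1 c10 [eg1 eh1]] := iterS_homog (ltn_addr k (ltn0Sn j)).
have [c3 c30 [eg3 eh3]] := iterS_homog (ltn0Sn j).
have [_ hk0 _] := Hfrac k0.
have [sg1 sh1] := size_iter_le (ltn0Sn 0); rewrite expn1 in sg1 sh1.
have [sgj shj] := size_iter_le (ltn0Sn j).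
exists (c1 * c2 ^+ d / c3); first by rewrite mulf_neq0 ?invr_eq0 // mulf_neq0 // expf_neq0.
rewrite addSn eg1 eh1 eg2 eh2 !homog_scale !homog_comp //.
have -> : homog d (g 1%N) (g j.+1) (h j.+1) = c3^-1 *: g j.+2.
  by rewrite eg3 scalerA mulVf ?scale1r.
have -> : homog d (h 1%N) (g j.+1) (h j.+1) = c3^-1 *: h j.+2.
  by rewrite eh3 scalerA mulVf ?scale1r.
by rewrite !homogZ !scalerA -expnS.
Qed.

Lemma h_iter_neq0 n : (0 < n)%N -> h n != 0.
Proof. by move=> n0; case: (Hfrac n0). Qed.

Lemma g_iter_neq0 n : (0 < n)%N -> g n != 0.
Proof.
move=> n0; apply/eqP => g0; have [cgh _ _] := Hfrac n0.
have /and3P [_ _] := has_deg_exp_iter n0; move: cgh.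
rewrite g0 coprime0p => /eqp_size; rewrite size_poly1 size_poly0 => ->.
rewrite eqSS /= => /eqP e; by move: (expn_gt0 d n); rewrite Hd1 -e.
Qed.

Lemma pdeg_iter n : (0 < n)%N ->
  [/\ (pdeg (g n) <= d ^ n)%N, (pdeg (h n) <= d ^ n)%N &
      (pdeg (g n) = d ^ n)%N \/ (pdeg (h n) = d ^ n)%N].
Proof.
move=> n0; have /and3P [] := has_deg_exp_iter n0; rewrite /pdeg.
move: (size (g n)) (size (h n)) (d ^ n)%N => A B D sA sB /orP [] /eqP e.
  by split; [lia | lia | left; lia].
by split; [lia | lia | right; lia].
Qed.

Lemma pdeg_iter_eq n : (0 < n)%N -> ~~ (pdeg (g n) < pdeg (h n))%N ->
  ~~ (pdeg (h n) < pdeg (g n))%N -> pdeg (g n) = (d ^ n)%N /\ pdeg (h n) = (d ^ n)%N.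
Proof. by move=> n0; have [] := pdeg_iter n0; lia. Qed.

Lemma pdeg_g_iter n : (0 < n)%N -> (pdeg (h n) < pdeg (g n))%N -> pdeg (g n) = (d ^ n)%N.
Proof. by move=> n0; have [] := pdeg_iter n0; lia. Qed.

Lemma pdeg_h_iter n : (0 < n)%N -> (pdeg (g n) < pdeg (h n))%N -> pdeg (h n) = (d ^ n)%N.
Proof. by move=> n0; have [] := pdeg_iter n0; lia. Qed.

Lemma mup0_g_iter_le n : (0 < n)%N -> (mup 0 (g n) <= d ^ n)%N.
Proof. by move=> n0; have [] := pdeg_iter n0; have := mup0_le_pdeg (g_iter_neq0 n0); lia. Qed.

Lemma mup0_h_iter_le n : (0 < n)%N -> (mup 0 (h n) <= d ^ n)%N.
Proof. by move=> n0; have [] := pdeg_iter n0; have := mup0_le_pdeg (h_iter_neq0 n0); lia. Qed.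

Lemma root_g_iter_Nroot_h n : (0 < n)%N -> root (g n) 0 -> ~~ root (h n) 0.
Proof. by move=> n0; have [cgh _ _] := Hfrac n0; apply: coprimep_root. Qed.

Lemma root_h_iter_Nroot_g n : (0 < n)%N -> root (h n) 0 -> ~~ root (g n) 0.
Proof.
by move=> n0; have [cgh _ _] := Hfrac n0; rewrite coprimep_sym in cgh; apply: coprimep_root.
Qed.

Lemma pdeg_iterD_gt j k : (0 < j)%N -> (0 < k)%N -> (pdeg (h k) < pdeg (g k))%N ->
  pdeg (g (j + k)%N) = (pdeg (g j) * pdeg (g k) + (d ^ j - pdeg (g j)) * pdeg (h k))%N /\
  pdeg (h (j + k)%N) = (pdeg (h j) * pdeg (g k) + (d ^ j - pdeg (h j)) * pdeg (h k))%N.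
Proof.
move=> j0 k0 lt; have [c c0 [-> ->]] := iterD_homog j0 k0; have [sg sh] := size_iter_le j0.
by rewrite !pdegZ //; split; apply: pdeg_homog_gt; rewrite ?g_iter_neq0 ?h_iter_neq0.
Qed.

Lemma pdeg_iterD_lt j k : (0 < j)%N -> (0 < k)%N -> (pdeg (g k) < pdeg (h k))%N ->
  pdeg (g (j + k)%N) = (mup 0 (g j) * pdeg (g k) + (d ^ j - mup 0 (g j)) * pdeg (h k))%N /\
  pdeg (h (j + k)%N) = (mup 0 (h j) * pdeg (g k) + (d ^ j - mup 0 (h j)) * pdeg (h k))%N.
Proof.
move=> j0 k0 lt; have [c c0 [-> ->]] := iterD_homog j0 k0; have [sg sh] := size_iter_le j0.
by rewrite !pdegZ //; split; apply: pdeg_homog_lt; rewrite ?g_iter_neq0 ?h_iter_neq0.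
Qed.

Lemma mup0_iterD_root_g j k : (0 < j)%N -> (0 < k)%N -> root (g k) 0 ->
  mup 0 (g (j + k)%N) = (mup 0 (g j) * mup 0 (g k))%N /\
  mup 0 (h (j + k)%N) = (mup 0 (h j) * mup 0 (g k))%N.
Proof.
move=> j0 k0 r; have [c c0 [-> ->]] := iterD_homog j0 k0; have [sg sh] := size_iter_le j0.
by rewrite !mup0Z //; split; apply: mup0_homog_root_num;
  rewrite ?g_iter_neq0 ?h_iter_neq0 ?root_g_iter_Nroot_h.
Qed.

Lemma mup0_iterD_root_h j k : (0 < j)%N -> (0 < k)%N -> root (h k) 0 ->
  mup 0 (g (j + k)%N) = ((d ^ j - pdeg (g j)) * mup 0 (h k))%N /\
  mup 0 (h (j + k)%N) = ((d ^ j - pdeg (h j)) * mup 0 (h k))%N.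
Proof.
move=> j0 k0 r; have [c c0 [-> ->]] := iterD_homog j0 k0; have [sg sh] := size_iter_le j0.
by rewrite !mup0Z //; split; apply: mup0_homog_root_den;
  rewrite ?g_iter_neq0 ?h_iter_neq0 ?root_h_iter_Nroot_g.
Qed.

Section RootOfNumerator.
Variable e0 : nat.
Hypotheses (e0_gt0 : (0 < e0)%N) (root_g_e0 : root (g e0) 0).

Lemma mup0_iterM_root_g i : (0 < i)%N ->
  mup 0 (g (i * e0)%N) = (mup 0 (g e0) ^ i)%N /\ mup 0 (h (i * e0)%N) = 0%N.
Proof.
have S0 : (0 < mup 0 (g e0))%N by rewrite mup0_gt0 ?g_iter_neq0.
have T0 : mup 0 (h e0) = 0%N by rewrite mupNroot // root_g_iter_Nroot_h.
elim: i => [//|[|i] IHi _]; first by rewrite !mul1n expn1.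
have ie0 : (0 < i.+1 * e0)%N by rewrite muln_gt0.
have [mg _] := IHi (ltn0Sn i).
have ri : root (g (i.+1 * e0)%N) 0 by rewrite -mup0_gt0 ?g_iter_neq0 // mg expn_gt0 S0.
rewrite mulSn; have [-> ->] := mup0_iterD_root_g e0_gt0 ie0 ri.
by rewrite mg T0 mul0n -expnS.
Qed.

Lemma mup0_iterDM_root_g q r : (0 < r)%N ->
  mup 0 (g (r + q * e0)%N) = (mup 0 (g r) * mup 0 (g e0) ^ q)%N /\
  mup 0 (h (r + q * e0)%N) = (mup 0 (h r) * mup 0 (g e0) ^ q)%N.
Proof.
move=> r0; have [->|q0] := posnP q; first by rewrite mul0n addn0 !muln1.
have [mg _] := mup0_iterM_root_g q0.
have qe0 : (0 < q * e0)%N by rewrite muln_gt0 q0.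
have rq : root (g (q * e0)%N) 0.
  by rewrite -mup0_gt0 ?g_iter_neq0 // mg expn_gt0 mup0_gt0 ?g_iter_neq0 ?root_g_e0.
by rewrite -mg; apply: mup0_iterD_root_g.
Qed.

Lemma mup0_iter_Ndvd k : ~~ (e0 %| k)%N ->
  mup 0 (g k) = (mup 0 (g (k %% e0)) * mup 0 (g e0) ^ (k %/ e0))%N /\
  mup 0 (h k) = (mup 0 (h (k %% e0)) * mup 0 (g e0) ^ (k %/ e0))%N.
Proof.
move=> Ndvd; have r0 : (0 < k %% e0)%N by rewrite lt0n.
by have := mup0_iterDM_root_g (k %/ e0) r0; rewrite addnC -divn_eq.
Qed.

End RootOfNumerator.

(* Were g_(e0)(0) = 0 with e0 < eps, the orders at 0 would be periodic modulo e0
   and h_eps(0) = 0 would force a root of h before e0. *)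
Lemma Nroot_g_iter_lt_eps e ep r :
  is_first (fun k => root (g k) 0) e -> is_first (fun k => root (h k) 0) (Some ep) ->
  (0 < r)%N -> (r < ep)%N -> ~~ root (g r) 0.
Proof.
case: e => [e0|] /=; last by move=> Ng _ r0 _; apply: Ng.
move=> [e00 [re0 mine0]] [ep0 [rep minep]] r0 lt_r_ep.
have [lt_r_e0|le_e0_r] := ltnP r e0; first exact: mine0.
have Nh_lt_e0 r' : (0 < r')%N -> (r' < e0)%N -> ~~ root (h r') 0.
  by move=> r'0 lt; apply: minep => //; lia.
exfalso; move: rep; rewrite -mup0_gt0 ?h_iter_neq0 //.
have [/dvdnP [q eq]|Ndvd] := boolP (e0 %| ep)%N.
  have q0 : (0 < q)%N by move: ep0; rewrite eq muln_gt0 => /andP [].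
  by rewrite eq (mup0_iterM_root_g e00 re0 q0).2.
rewrite (mup0_iter_Ndvd e00 re0 Ndvd).2 mupNroot ?Nh_lt_e0 ?ltn_pmod //.
by rewrite lt0n.
Qed.

Section NuBeforeMu.
Variables (n : nat) (mu : option nat).
Hypothesis Hmu : is_first (fun k => (pdeg (g k) < pdeg (h k))%N) mu.
Hypothesis Hnu : is_first (fun k => (pdeg (h k) < pdeg (g k))%N) (Some n).
Hypothesis lt_nu_mu : olt (Some n) mu.
Local Notation delta := (absdiff (pdeg (g n)) (pdeg (h n))).

Lemma pdeg_iter_lt_nu k : (0 < k)%N -> (k < n)%N ->
  pdeg (g k) = (d ^ k)%N /\ pdeg (h k) = (d ^ k)%N.
Proof.
have [_ [_ minn]] := Hnu; move=> k0 lt_k_n; apply: pdeg_iter_eq => //; last exact: minn.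
by apply: (is_first_lt Hmu lt_nu_mu) => //; apply: ltnW.
Qed.

Lemma pdeg_nu : pdeg (g n) = (d ^ n)%N /\ (pdeg (h n) + delta = d ^ n)%N /\ (0 < delta)%N.
Proof.
have [n0 [lt_n _]] := Hnu; have := pdeg_g_iter n0 lt_n; rewrite /absdiff.
by move: lt_n; move: (pdeg (g n)) (pdeg (h n)) (d ^ n)%N => A B D; lia.
Qed.

Lemma pdeg_iterM_nu i : (0 < i)%N ->
  pdeg (g (i * n)%N) = (d ^ (i * n))%N /\ (pdeg (h (i * n)%N) + delta ^ i = d ^ (i * n))%N.
Proof.
have [n0 _] := Hnu; have [gn [hn delta0]] := pdeg_nu.
set del := absdiff _ _ in hn delta0 *; clearbody del.
elim: i => [//|[|i] IHi _]; first by rewrite mul1n expn1.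
have [gi hi] := IHi (ltn0Sn i); have in0 : (0 < i.+1 * n)%N by rewrite muln_gt0.
have lt_i : (pdeg (h (i.+1 * n)%N) < pdeg (g (i.+1 * n)%N))%N.
  by have := expn_gt0 del i.+1; rewrite delta0 gi -hi; lia.
have [eg eh] := pdeg_iterD_gt n0 in0 lt_i.
rewrite mulSn eg eh gi gn subnn mul0n addn0 expnD; split => //.
rewrite expnS; move: hi hn; clear IHi.
move: (pdeg (h n)) (pdeg (h (i.+1 * n)%N)) (d ^ n)%N (d ^ (i.+1 * n))%N (del ^ i.+1)%N.
by move=> B C E D P; nia.
Qed.

Lemma pdeg_iter_Ndvd_nu k : (0 < k)%N -> ~~ (n %| k)%N ->
  pdeg (g k) = (d ^ k)%N /\ pdeg (h k) = (d ^ k)%N.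
Proof.
have [n0 _] := Hnu; move=> k0 Ndvd.
have r0 : (0 < k %% n)%N by rewrite lt0n.
have lt_r : (k %% n < n)%N by rewrite ltn_pmod.
have [q0|q0] := posnP (k %/ n); first by rewrite (divn_eq k n) q0 add0n; apply: pdeg_iter_lt_nu.
have qn0 : (0 < k %/ n * n)%N by rewrite muln_gt0 q0.
have [gq hq] := pdeg_iterM_nu q0.
have lt_q : (pdeg (h (k %/ n * n)%N) < pdeg (g (k %/ n * n)%N))%N.
  by have := expn_gt0 delta (k %/ n); rewrite (pdeg_nu.2.2) gq -hq; lia.
have [gr hr] := pdeg_iter_lt_nu r0 lt_r.
have [] := pdeg_iterD_gt r0 qn0 lt_q.
by rewrite addnC -divn_eq gr hr gq subnn !mul0n !addn0 -expnD addnC -divn_eq.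
Qed.

Lemma iter_degrees_nu_lt_mu :
  let delta := absdiff (pdeg (g n)) (pdeg (h n)) in
  (forall i, (0 < i)%N -> pdeg (g (i * n)%N) = (d ^ (i * n))%N /\
     (pdeg (h (i * n)%N) + delta ^ i = d ^ (i * n))%N) /\
  (forall k, (0 < k)%N -> ~~ (n %| k)%N ->
     pdeg (g k) = (d ^ k)%N /\ pdeg (h k) = (d ^ k)%N).
Proof. by split; [apply: pdeg_iterM_nu | apply: pdeg_iter_Ndvd_nu]. Qed.

End NuBeforeMu.

Section MuBeforeNu.
Variables (m : nat) (nu : option nat).
Hypothesis Hmu : is_first (fun k => (pdeg (g k) < pdeg (h k))%N) (Some m).
Hypothesis Hnu : is_first (fun k => (pdeg (h k) < pdeg (g k))%N) nu.
Hypothesis lt_mu_nu : olt (Some m) nu.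
Local Notation delta := (absdiff (pdeg (g m)) (pdeg (h m))).

Lemma pdeg_iter_lt_mu k : (0 < k)%N -> (k < m)%N ->
  pdeg (g k) = (d ^ k)%N /\ pdeg (h k) = (d ^ k)%N.
Proof.
have [_ [_ minm]] := Hmu; move=> k0 lt_k_m; apply: pdeg_iter_eq => //; first exact: minm.
by apply: (is_first_lt Hnu lt_mu_nu) => //; apply: ltnW.
Qed.

Lemma pdeg_mu : pdeg (h m) = (d ^ m)%N /\ (pdeg (g m) + delta = d ^ m)%N /\ (0 < delta)%N.
Proof.
have [m0 [lt_m _]] := Hmu; have := pdeg_h_iter m0 lt_m; rewrite /absdiff.
by move: lt_m; move: (pdeg (g m)) (pdeg (h m)) (d ^ m)%N => A B D; lia.
Qed.

Lemma subn_pdeg_g_mu : (d ^ m - pdeg (g m))%N = delta.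
Proof. by have [hm [gm _]] := pdeg_mu; rewrite -gm addKn. Qed.

(* The order of f^(k) at 0 is what the composition with f^(mu) loses in degree. *)
Lemma pdeg_iter_mu_add k : (0 < k)%N ->
  (pdeg (g (m + k)%N) + delta * mup 0 (g k) = d ^ (m + k))%N /\
  (pdeg (h (m + k)%N) + delta * mup 0 (h k) = d ^ (m + k))%N.
Proof.
have [m0 [lt_m _]] := Hmu; have [hm [gm _]] := pdeg_mu; move=> k0.
have := mup0_g_iter_le k0; have := mup0_h_iter_le k0.
have [] := pdeg_iterD_lt k0 m0 lt_m; rewrite addnC => -> ->.
move: gm; set del := absdiff _ _; clearbody del; rewrite hm expnD.
move: (mup 0 (g k)) (mup 0 (h k)) (d ^ k)%N (d ^ m)%N (pdeg (g m)) => X Y Z W A.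
by split; nia.
Qed.

Lemma pdeg_iter_gt_mu k : (m < k)%N -> mup 0 (g (k - m)) = 0%N -> mup 0 (h (k - m)) = 0%N ->
  pdeg (g k) = (d ^ k)%N /\ pdeg (h k) = (d ^ k)%N.
Proof.
move=> lt_m_k mg mh; have km0 : (0 < k - m)%N by rewrite subn_gt0.
by have := pdeg_iter_mu_add km0; rewrite (subnKC (ltnW lt_m_k)) mg mh !muln0 !addn0.
Qed.

Lemma iter_degrees_no_root :
  is_first (fun k => root (g k) 0) None -> is_first (fun k => root (h k) 0) None ->
  forall k, (0 < k)%N -> k != m -> pdeg (g k) = (d ^ k)%N /\ pdeg (h k) = (d ^ k)%N.
Proof.
move=> Ng Nh k k0 km; have [lt_k_m|lt_m_k] := ltnP k m; first exact: pdeg_iter_lt_mu.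
have {}lt_m_k : (m < k)%N by rewrite ltn_neqAle eq_sym km.
have km0 : (0 < k - m)%N by rewrite subn_gt0.
by apply: pdeg_iter_gt_mu; rewrite // mupNroot //; [apply: Ng | apply: Nh].
Qed.

Section NumeratorRootFirst.
Variables (ee : nat) (eps : option nat).
Hypothesis He : is_first (fun k => root (g k) 0) (Some ee).
Hypothesis Heps : is_first (fun k => root (h k) 0) eps.
Hypothesis lt_e_eps : olt (Some ee) eps.

Lemma mup0_iter_lt_e r : (0 < r)%N -> (r < ee)%N -> mup 0 (g r) = 0%N /\ mup 0 (h r) = 0%N.
Proof.
have [_ [_ mine]] := He; move=> r0 lt_r_e.
split; apply: mupNroot; first exact: mine.
exact: (is_first_lt Heps lt_e_eps r0 (ltnW lt_r_e)).
Qed.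

Lemma pdeg_iter_mu_e i :
  (pdeg (g (i * ee + m)%N) + delta * mup 0 (g ee) ^ i = d ^ (i * ee + m))%N /\
  pdeg (h (i * ee + m)%N) = (d ^ (i * ee + m))%N.
Proof.
have [ee0 [re _]] := He; have [hm [gm _]] := pdeg_mu.
case: i => [|i]; first by rewrite mul0n add0n expn0 muln1 gm hm.
have iee0 : (0 < i.+1 * ee)%N by rewrite muln_gt0.
have [mg mh] := mup0_iterM_root_g ee0 re (ltn0Sn i).
have [eg eh] := pdeg_iter_mu_add iee0.
by rewrite (addnC m) mg mh muln0 addn0 in eg eh.
Qed.

Lemma pdeg_iter_not_mu_e k : (0 < k)%N -> (forall i, k != (i * ee + m)%N) ->
  pdeg (g k) = (d ^ k)%N /\ pdeg (h k) = (d ^ k)%N.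
Proof.
have [ee0 [re _]] := He; move=> k0 Nk.
have [lt_k_m|le_m_k] := ltnP k m; first exact: pdeg_iter_lt_mu.
have lt_m_k : (m < k)%N by rewrite ltn_neqAle le_m_k andbT eq_sym; apply: Nk 0%N.
have Ndvd : ~~ (ee %| k - m)%N.
  by apply/negP => /dvdnP [q eq]; move: (Nk q); rewrite -eq subnK ?eqxx // (ltnW lt_m_k).
have [mg mh] := mup0_iter_Ndvd ee0 re Ndvd.
have r0 : (0 < (k - m) %% ee)%N by rewrite lt0n.
have [rg rh] := mup0_iter_lt_e r0 (ltn_pmod _ ee0).
by apply: pdeg_iter_gt_mu; rewrite // ?mg ?mh ?rg ?rh mul0n.
Qed.

Lemma iter_degrees_e_lt_eps :
  let delta := absdiff (pdeg (g m)) (pdeg (h m)) in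
  let S := mup 0 (g ee) in
  (forall i, (pdeg (g (i * ee + m)%N) + delta * S ^ i = d ^ (i * ee + m))%N /\
     pdeg (h (i * ee + m)%N) = (d ^ (i * ee + m))%N) /\
  (forall k, (0 < k)%N -> (forall i, k != (i * ee + m)%N) ->
     pdeg (g k) = (d ^ k)%N /\ pdeg (h k) = (d ^ k)%N).
Proof. by split; [apply: pdeg_iter_mu_e | apply: pdeg_iter_not_mu_e]. Qed.

End NumeratorRootFirst.

Section DenominatorRootFirst.
Variables (ep : nat) (e : option nat).
Hypothesis He : is_first (fun k => root (g k) 0) e.
Hypothesis Heps : is_first (fun k => root (h k) 0) (Some ep).
Local Notation T := (mup 0 (h ep)).

Lemma mup0_h_eps_gt0 : (0 < T)%N.
Proof. by have [ep0 [rep _]] := Heps; rewrite mup0_gt0 ?h_iter_neq0. Qed.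

Lemma mup0_iter_eps_add j : (0 < j)%N -> (j < m)%N ->
  mup 0 (g (j + ep)%N) = 0%N /\ mup 0 (h (j + ep)%N) = 0%N.
Proof.
have [ep0 [rep _]] := Heps; move=> j0 lt_j_m; have [gj hj] := pdeg_iter_lt_mu j0 lt_j_m.
by have [-> ->] := mup0_iterD_root_h j0 ep0 rep; rewrite gj hj subnn !mul0n.
Qed.

Lemma mup0_iter_eps_mu : mup 0 (g (ep + m)%N) = (delta * T)%N /\ mup 0 (h (ep + m)%N) = 0%N.
Proof.
have [ep0 [rep _]] := Heps; have [m0 _] := Hmu; have [hm _] := pdeg_mu.
rewrite addnC; have [-> ->] := mup0_iterD_root_h m0 ep0 rep.
by rewrite subn_pdeg_g_mu hm subnn mul0n.
Qed.

Lemma root_g_iter_eps_mu : root (g (ep + m)%N) 0.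
Proof.
have [ep0 _] := Heps; have [_ [_ delta0]] := pdeg_mu.
rewrite -mup0_gt0 ?g_iter_neq0 ?addn_gt0 ?ep0 //.
by rewrite mup0_iter_eps_mu.1 muln_gt0 delta0 mup0_h_eps_gt0.
Qed.

Lemma mup0_iter_lt_eps_mu r : (0 < r)%N -> (r < ep + m)%N -> r != ep ->
  mup 0 (g r) = 0%N /\ mup 0 (h r) = 0%N.
Proof.
have [ep0 [_ minep]] := Heps; move=> r0 lt_r ne.
have [lt_r_ep|le_ep_r] := ltnP r ep.
  by rewrite !mupNroot ?minep ?(Nroot_g_iter_lt_eps He Heps).
have lt_ep_r : (ep < r)%N by rewrite ltn_neqAle eq_sym ne.
have j0 : (0 < r - ep)%N by rewrite subn_gt0.
have lt_j_m : (r - ep < m)%N by move: lt_r lt_ep_r; lia.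
by rewrite -(subnK le_ep_r); apply: mup0_iter_eps_add.
Qed.

Lemma e_eps_mu : e = Some (ep + m)%N.
Proof.
have [ep0 [rep _]] := Heps.
apply: (is_first_eq He); [by rewrite addn_gt0 ep0 | exact: root_g_iter_eps_mu |].
move=> k k0 lt_k; have [->|ne] := eqVneq k ep; first exact: root_h_iter_Nroot_g.
by rewrite -mup0_gt0 ?g_iter_neq0 // (mup0_iter_lt_eps_mu k0 lt_k ne).1.
Qed.

Lemma iter_orders_eps :
  e = Some (ep + m)%N /\
  let ee := (ep + m)%N in
  let delta := absdiff (pdeg (g m)) (pdeg (h m)) in
  let T := mup 0 (h ep) in
  (forall k, (0 < k)%N ->
     (pdeg (g (m + k)%N) + delta * mup 0 (g k) = d ^ (m + k))%N /\
     (pdeg (h (m + k)%N) + delta * mup 0 (h k) = d ^ (m + k))%N) /\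
  (forall i, (0 < i)%N ->
     mup 0 (g (i * ee)%N) = (delta ^ i * T ^ i)%N /\ mup 0 (h (i * ee)%N) = 0%N) /\
  (forall i, mup 0 (h (i * ee + ep)%N) = (delta ^ i * T ^ i.+1)%N /\
     mup 0 (g (i * ee + ep)%N) = 0%N) /\
  (forall k, (0 < k)%N -> (forall i, (0 < i)%N -> k != (i * ee)%N) ->
     (forall i, k != (i * ee + ep)%N) -> mup 0 (g k) = 0%N /\ mup 0 (h k) = 0%N).
Proof.
have [ep0 [rep _]] := Heps; have ee0 : (0 < ep + m)%N by rewrite addn_gt0 ep0.
have re := root_g_iter_eps_mu; have [mg_e _] := mup0_iter_eps_mu.
split; first exact: e_eps_mu.
split; first exact: pdeg_iter_mu_add.
split.
  by move=> i i0; have [-> ->] := mup0_iterM_root_g ee0 re i0; rewrite mg_e expnMn.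
split.
  move=> i; rewrite addnC; have [-> ->] := mup0_iterDM_root_g ee0 re i ep0.
  by rewrite mg_e (mupNroot (root_h_iter_Nroot_g ep0 rep)) mul0n expnMn expnS mulnCA.
move=> k k0 Nmul Nadd.
have Ndvd : ~~ (ep + m %| k)%N.
  apply/negP => /dvdnP [q eq]; have q0 : (0 < q)%N by move: k0; rewrite eq muln_gt0 => /andP [].
  by move: (Nmul q q0); rewrite eq eqxx.
have r0 : (0 < k %% (ep + m))%N by rewrite lt0n.
have ne : (k %% (ep + m) != ep)%N.
  by apply/eqP => re'; move: (Nadd (k %/ (ep + m))%N); rewrite {1}(divn_eq k (ep + m)) re' eqxx.
have [rg rh] := mup0_iter_lt_eps_mu r0 (ltn_pmod _ ee0) ne.
by have [-> ->] := mup0_iter_Ndvd ee0 re Ndvd; rewrite rg rh !mul0n.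
Qed.

End DenominatorRootFirst.
End MuBeforeNu.
End Iterates.

Unset Implicit Arguments.
Set Strict Implicit.

Theorem lemma7 (F : fieldType) (g h : nat -> {poly F}) (d : nat)
  (e eps mu nu : option nat)
  (Hlow : forall k, (0 < k)%N ->
     [/\ coprimep (g k) (h k), h k != 0 &
         rat_iter (g 1%N) (h 1%N) k = tofrac (g k) / tofrac (h k)])
  (Hd : d = maxn (pdeg (g 1%N)) (pdeg (h 1%N)))
  (Hd1 : (1 <= d)%N)
  (He : is_first (fun k => root (g k) 0) e)
  (Heps : is_first (fun k => root (h k) 0) eps)
  (Hmu : is_first (fun k => (pdeg (g k) < pdeg (h k))%N) mu)
  (Hnu : is_first (fun k => (pdeg (h k) < pdeg (g k))%N) nu) :
  (* (i) *)
  (forall n, nu = Some n -> olt nu mu ->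
     let delta := absdiff (pdeg (g n)) (pdeg (h n)) in
     (forall i, (0 < i)%N ->
        pdeg (g (i * n)%N) = (d ^ (i * n))%N /\
        (pdeg (h (i * n)%N) + delta ^ i = d ^ (i * n))%N) /\
     (forall k, (0 < k)%N -> ~~ (n %| k)%N ->
        pdeg (g k) = (d ^ k)%N /\ pdeg (h k) = (d ^ k)%N)) /\
  (* (ii) *)
  (forall m, mu = Some m -> olt mu nu -> eps = None -> e = None ->
     forall k, (0 < k)%N -> k != m ->
        pdeg (g k) = (d ^ k)%N /\ pdeg (h k) = (d ^ k)%N) /\
  (* (iii) *)
  (forall m ee, mu = Some m -> olt mu nu -> e = Some ee -> olt e eps ->
     let delta := absdiff (pdeg (g m)) (pdeg (h m)) in
     let S := mup 0 (g ee) in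
     (forall i,
        (pdeg (g (i * ee + m)%N) + delta * S ^ i = d ^ (i * ee + m))%N /\
        pdeg (h (i * ee + m)%N) = (d ^ (i * ee + m))%N) /\
     (forall k, (0 < k)%N -> (forall i, k != (i * ee + m)%N) ->
        pdeg (g k) = (d ^ k)%N /\ pdeg (h k) = (d ^ k)%N)) /\
  (* (iv) *)
  (forall m ep, mu = Some m -> olt mu nu -> eps = Some ep ->
     e = Some (ep + m)%N /\
     let ee := (ep + m)%N in
     let delta := absdiff (pdeg (g m)) (pdeg (h m)) in
     let T := mup 0 (h ep) in
     (forall k, (0 < k)%N ->
        (pdeg (g (m + k)%N) + delta * mup 0 (g k) = d ^ (m + k))%N /\
        (pdeg (h (m + k)%N) + delta * mup 0 (h k) = d ^ (m + k))%N) /\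
     (forall i, (0 < i)%N ->
        mup 0 (g (i * ee)%N) = (delta ^ i * T ^ i)%N /\ mup 0 (h (i * ee)%N) = 0%N) /\
     (forall i,
        mup 0 (h (i * ee + ep)%N) = (delta ^ i * T ^ i.+1)%N /\
        mup 0 (g (i * ee + ep)%N) = 0%N) /\
     (forall k, (0 < k)%N -> (forall i, (0 < i)%N -> k != (i * ee)%N) ->
        (forall i, k != (i * ee + ep)%N) ->
        mup 0 (g k) = 0%N /\ mup 0 (h k) = 0%N)).
Proof.
split; first by move=> n en lt; subst nu; exact: (iter_degrees_nu_lt_mu Hlow Hd Hd1 Hmu Hnu lt).
split.
  move=> m em lt epsN eN; subst mu eps e.
  exact: (iter_degrees_no_root Hlow Hd Hd1 Hmu Hnu lt He Heps).
split.
  move=> m ee em lt eee lt_e; subst mu e.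
  exact: (iter_degrees_e_lt_eps Hlow Hd Hd1 Hmu Hnu lt He Heps lt_e).
move=> m ep em lt eep; subst mu eps.
exact: (iter_orders_eps Hlow Hd Hd1 Hmu Hnu lt He Heps).
Qed.
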